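(* Let $I$ be a general ring and $e=e^2\in I$. Then $QN(eIe)=eIe\cap QN(I)$.
   Context: A general ring is an associative ring not necessarily having an identity; $eIe=\{eae\mid a\in I\}$ is a general ring under the operations of $I$. For a general ring $K$ and $p,q\in K$, $p*q=p+q-pq$; $Q(K)=\{q\in K\mid p*q=0=q*p\text{ for some }p\in K\}$; $\mathrm{comm}_K(q)=\{x\in K\mid xq=qx\}$; $QN(K)=\{q\in K\mid qx\in Q(K)\text{ for every }x\in\mathrm{comm}_K(q)\}$. *)

From HB Require Import structures.
From mathcomp Require Import all_boot all_algebra.
Set Implicit Arguments. Unset Strict Implicit. Unset Printing Implicit Defensive.
Import GRing.Theory.
Local Open Scope ring_scope.

Record genRing := GenRing {
  gcarrier :> zmodType;
  gmul : gcarrier -> gcarrier -> gcarrier;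
  gmulA : forall x y z, gmul x (gmul y z) = gmul (gmul x y) z;
  gmulDl : forall x y z, gmul (x + y) z = gmul x z + gmul y z;
  gmulDr : forall x y z, gmul x (y + z) = gmul x y + gmul x z
}.

Section Defs.
Variable I : genRing.
Local Notation "x ** y" := (gmul x y) (at level 40, left associativity).

Definition circ (p q : I) : I := p + q - p ** q.

(* A general subring K of I is given by its carrier predicate K : I -> Prop,
   with the operations of I. *)
Definition Qset (K : I -> Prop) (q : I) : Prop :=
  K q /\ exists p, K p /\ circ p q = 0 /\ circ q p = 0.

Definition commset (K : I -> Prop) (q : I) (x : I) : Prop :=
  K x /\ x ** q = q ** x.

Definition QNset (K : I -> Prop) (q : I) : Prop :=
  K q /\ forall x, commset K q x -> Qset K (q ** x).

Definition wholeset : I -> Prop := fun _ => True.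

Definition corner (e : I) : I -> Prop := fun y => exists a, y = e ** a ** e.
End Defs.

From mathcomp Require Import all_boot all_algebra.
Import GRing.Theory.
Local Open Scope ring_scope.

(* An element y lies in the
   corner eIe exactly when ey = y = ye, so eIe is closed under products.  Two
   facts about the corner drive the proof:
   - a quasi-inverse (in I) of an element of eIe automatically lies in eIe,
     hence Q(eIe) = eIe ∩ Q(I);
   - for q in eIe, compressing any x commuting with q to exe keeps it
     commuting with q and does not change the product: q(exe) = qx.
   Inclusion "⊆": for x in I commuting with q, apply the hypothesis to exe.
   Inclusion "⊇": for x in eIe commuting with q, qx is in eIe and in Q(I),
   hence in Q(eIe). *)

Section Corner.
Context {I : genRing}.
Local Notation "x ** y" := (gmul x y) (at level 40, left associativity).

Lemma gmulBl (x y z : I) : (x - y) ** z = x ** z - y ** z.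
Proof. by apply/eqP; rewrite eq_sym subr_eq -gmulDl subrK. Qed.

Lemma gmulBr (x y z : I) : z ** (x - y) = z ** x - z ** y.
Proof. by apply/eqP; rewrite eq_sym subr_eq -gmulDr subrK. Qed.

Lemma circ0_left {p a : I} : circ p a = 0 -> p = p ** a - a.
Proof. by move=> /eqP; rewrite /circ subr_eq0 => /eqP <-; rewrite addrK. Qed.

Lemma circ0_right {p a : I} : circ a p = 0 -> p = a ** p - a.
Proof. by move=> /eqP; rewrite /circ subr_eq0 addrC => /eqP <-; rewrite addrK. Qed.

Lemma Q_whole {K : I -> Prop} {y : I} : Qset K y -> Qset (@wholeset I) y.
Proof. by move=> [_ [p [_ hp]]]; split=> //; exists p. Qed.

Context {e : I} (he : e ** e = e).

Lemma corner_idl {y : I} : corner e y -> e ** y = y.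
Proof. by move=> [a ->]; rewrite !gmulA he. Qed.

Lemma corner_idr {y : I} : corner e y -> y ** e = y.
Proof. by move=> [a ->]; rewrite -!gmulA he. Qed.

Lemma cornerI (y : I) : e ** y = y -> y ** e = y -> corner e y.
Proof. by move=> hl hr; exists y; rewrite hl hr. Qed.

Lemma corner_mul (y z : I) : corner e y -> corner e z -> corner e (y ** z).
Proof.
move=> Ky Kz; apply: cornerI; first by rewrite gmulA corner_idl.
by rewrite -gmulA corner_idr.
Qed.

Lemma corner_quasi_inverse (y p : I) :
  corner e y -> circ p y = 0 -> circ y p = 0 -> corner e p.
Proof.
move=> Ky hpy hyp; apply: cornerI.
- by rewrite {1}(circ0_right hyp) gmulBr gmulA corner_idl // -(circ0_right hyp).
- by rewrite {1}(circ0_left hpy) gmulBl -gmulA corner_idr // -(circ0_left hpy).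
Qed.

Lemma Q_corner (y : I) : corner e y -> Qset (@wholeset I) y -> Qset (corner e) y.
Proof.
move=> Ky [_ [p [_ [hpy hyp]]]]; split=> //; exists p.
by split=> //; apply: corner_quasi_inverse hpy hyp.
Qed.

Lemma compress_mul {q x : I} :
  corner e q -> x ** q = q ** x -> q ** (e ** x ** e) = q ** x.
Proof. by move=> Kq cx; rewrite !gmulA (corner_idr Kq) -cx -gmulA (corner_idr Kq). Qed.

Lemma compress_comm {q x : I} : corner e q -> x ** q = q ** x ->
  commset (corner e) q (e ** x ** e).
Proof.
move=> Kq cx; split; first by exists x.
by rewrite compress_mul // -!gmulA (corner_idl Kq) cx gmulA (corner_idl Kq).
Qed.

End Corner.

Theorem lemma3p4 (I : genRing) (e : I) (he : gmul e e = e) :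
  forall q : I, QNset (corner e) q <-> (corner e q /\ QNset (@wholeset I) q).
Proof.
move=> q; split.
- move=> [Kq QNq]; split=> //; split=> // x [_ cx].
  have Qqexe := QNq _ (compress_comm he Kq cx).
  by rewrite -(compress_mul he Kq cx); apply: Q_whole Qqexe.
- move=> [Kq [_ QNq]]; split=> // x [Kx cx].
  apply: Q_corner => //; first exact: corner_mul.
  exact: QNq.
Qed.
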